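(* In the setting of the context, $F=E_M\circ E_{M_1}$ restricts to a faithful linear functional $F:C\to k$; i.e. for $c\in C$, $F(cC)=0$ implies $c=0$.
   Context: $k$ is a field; $C_R(S)=\{r\in R:rs=sr\ \forall s\in S\}$. $N\subseteq M$ is a strongly separable, irreducible extension of $k$-algebras: $C_M(N)=k1$ and there are an $N$-bimodule map $E:M\to N$ and $x_1,\dots,x_n,y_1,\dots,y_n\in M$ with $\sum_iE(mx_i)y_i=m=\sum_ix_iE(y_im)$ for all $m\in M$, $E(1)\neq0$, $\sum_ix_iy_i\neq0$; normalized so that $E(1)=1$, whence $\sum_ix_iy_i=\lambda^{-1}1$ with $0\neq\lambda\in k$. Basic construction: given $S\subseteq R$, an $S$-bimodule map $E_S:R\to S$ with $E_S(1)=1$ and $r_i,s_i\in R$ with $\sum_iE_S(rr_i)s_i=r=\sum_ir_iE_S(s_ir)$ and $\sum_ir_is_i=\lambda^{-1}1$, set $R_1=R\otimes_SR$ with product $(a\otimes b)(c\otimes d)=aE_S(bc)\otimes d$, unit $\sum_ir_i\otimes s_i$, $R\subseteq R_1$ via $r\mapsto\sum_irr_i\otimes s_i$, $E_R:R_1\to R$, $a\otimes b\mapsto\lambda ab$; then $E_R$, $\lambda^{-1}r_i\otimes1$, $1\otimes s_i$ satisfy the same conditions with the same $\lambda$. From $(N\subseteq M,E)$ get $M_1,E_M$; from $(M\subseteq M_1,E_M)$ get $M_2,E_{M_1}$. Let $A=C_{M_1}(N)$, $B=C_{M_2}(M)$, $C=C_{M_2}(N)$. Depth 2 is assumed: $M_1$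 is free as right $M$-module with basis in $A$, $M_2$ free as right $M_1$-module with basis in $B$. For $c\in C$, $E_M(E_{M_1}(c))\in C_M(N)=k1$, identified with $k$. *)

From HB Require Import structures.
From mathcomp Require Import all_boot all_order all_algebra.
Set Implicit Arguments.
Unset Strict Implicit.
Unset Printing Implicit Defensive.
Import GRing.Theory.
Local Open Scope ring_scope.

Definition centralizes (R : pzRingType) (S : R -> Prop) (x : R) : Prop :=
  forall s, S s -> x * s = s * x.

Definition bilinear_balanced (k : fieldType) (R : algType k) (S : R -> Prop)
  (V : lmodType k) (phi : R -> R -> V) : Prop :=
  [/\ (forall (a : k) (u v b : R), phi (a *: u + v) b = a *: phi u b + phi v b),
      (forall (a : k) (u v b : R), phi b (a *: u + v) = a *: phi b u + phi b v)
    & (forall s u v : R, S s -> phi (u * s) v = phi u (s * v))].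

(* R1 (with tens a b = a (x)_S b) is the basic construction R (x)_S R of
   (S subset R, E_S) with quasi-basis (r_i, s_i), embedding iota : R -> R1
   and conditional expectation E_R : R1 -> R.
   tens : R x R -> R1 is a tensor product over S (universal S-balanced
   k-bilinear map whose values span R1), the product is
   (a(x)b)(c(x)d) = a E_S(bc) (x) d, the unit is sum_i r_i (x) s_i,
   iota r = sum_i r r_i (x) s_i and E_R is the k-linear map a(x)b |-> lam ab. *)
Definition is_basic_construction (k : fieldType) (R : algType k)
  (S : R -> Prop) (ES : R -> R) (lam : k) (n : nat) (r s : 'I_n -> R)
  (R1 : algType k) (tens : R -> R -> R1) (iota : R -> R1) (ER : R1 -> R) : Prop :=
  bilinear_balanced S tens /\
      (forall (V : lmodType k) (phi : R -> R -> V), bilinear_balanced S phi ->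
         exists f : R1 -> V,
           (forall (a : k) (u v : R1), f (a *: u + v) = a *: f u + f v) /\
           (forall u v : R, f (tens u v) = phi u v)) /\
      (forall z : R1, exists l : seq (R * R), z = \sum_(p <- l) tens p.1 p.2) /\
      (forall a b c d : R, tens a b * tens c d = tens (a * ES (b * c)) d) /\
      1 = \sum_(i < n) tens (r i) (s i) /\
      (forall u : R, iota u = \sum_(i < n) tens (u * r i) (s i)) /\
      (forall (a : k) (u v : R1), ER (a *: u + v) = a *: ER u + ER v) /\
      (forall u v : R, ER (tens u v) = lam *: (u * v)).

From HB Require Import structures.
From mathcomp Require Import all_boot all_order all_algebra.
Import GRing.Theory.
Local Open Scope ring_scope.
Set Implicit Arguments. Unset Strict Implicit.

(* Write a ⊗ b for tens2 a b and coef c a := λ^-1 E_{M_1}(c (a ⊗ 1)) (this is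
   tens_lcoef), so that c (a ⊗ b) = coef c a ⊗ b and
   F(c (a ⊗ b)) = λ E_M(coef c a · b).  Elements of A ⊗ A lie in C, so if
   F(c C) = 0 then E_M(coef c a · b) = 0 for a, b in A; since A spans M_1 as a
   right M-module (depth 2), coef c a is annihilated by E_M against all of M_1
   and vanishes by the quasi-basis of M ⊆ M_1.  Using depth 2 once more, c kills
   every a ⊗ b, so c = c 1 = 0.  That F(c) is a scalar follows from E_{M_1} and
   E_M being bimodule maps and C_M(N) = k.  Only the depth-2 condition on
   M ⊆ M_1 (the spanning part) is needed. *)

Section LinearMap.

Variables (k : fieldType) (U V : lmodType k) (f : U -> V).
Hypothesis f_lin : linear f.

Let fL : {linear U -> V} := HB.pack f (GRing.isLinear.Build k U V *:%R f f_lin).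

Lemma lin0 : f 0 = 0.
Proof. exact: (raddf0 fL). Qed.

Lemma linZ a u : f (a *: u) = a *: f u.
Proof. exact: (scalable_linear f_lin). Qed.

Lemma lin_sum (I : Type) (r : seq I) (P : pred I) (F : I -> U) :
  f (\sum_(i <- r | P i) F i) = \sum_(i <- r | P i) f (F i).
Proof. exact: (raddf_sum fL). Qed.

End LinearMap.

Lemma quasi_basis_faithful (R : pzRingType) (ES : R -> R) (n : nat)
    (r s : 'I_n -> R) (w : R) :
  (forall u, \sum_(i < n) ES (u * r i) * s i = u) ->
  (forall z, ES (w * z) = 0) -> w = 0.
Proof. by move=> qb ES0; rewrite -(qb w) big1 // => i _; rewrite ES0 mul0r. Qed.

Section BasicConstruction.

Variables (k : fieldType) (R : algType k) (S : R -> Prop) (ES : R -> R)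
  (lam : k) (n : nat) (r s : 'I_n -> R) (R1 : algType k)
  (tens : R -> R -> R1) (iota : R -> R1) (ER : R1 -> R).
Hypothesis bc : is_basic_construction S ES lam r s tens iota ER.

Lemma tens_linearl b : linear (tens^~ b).
Proof. by case: bc => [[tensDl _ _] _] a u v; apply: tensDl. Qed.

Lemma tens_linearr a : linear (tens a).
Proof. by case: bc => [[_ tensDr _] _] c u v; apply: tensDr. Qed.

Lemma tens_balanced t u v : S t -> tens (u * t) v = tens u (t * v).
Proof. by case: bc => [[_ _ tens_bal] _]; apply: tens_bal. Qed.

Lemma tens_span z : exists l : seq (R * R), z = \sum_(p <- l) tens p.1 p.2.
Proof. by case: bc => _ [_ []]. Qed.

Lemma tensM a b c d : tens a b * tens c d = tens (a * ES (b * c)) d.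
Proof. by case: bc => _ [_ [_ []]]. Qed.

Lemma one_sum_tens : 1 = \sum_(i < n) tens (r i) (s i).
Proof. by case: bc => _ [_ [_ [_ []]]]. Qed.

Lemma iotaE u : iota u = \sum_(i < n) tens (u * r i) (s i).
Proof. by case: bc => _ [_ [_ [_ [_ []]]]]. Qed.

Lemma ER_linear : linear ER.
Proof. by case: bc => _ [_ [_ [_ [_ [_ []]]]]]. Qed.

Lemma ER_tens u v : ER (tens u v) = lam *: (u * v).
Proof. by case: bc => _ [_ [_ [_ [_ [_ []]]]]]. Qed.

Lemma iota_linear : linear iota.
Proof.
move=> a u v; rewrite !iotaE scaler_sumr -big_split; apply: eq_bigr => i _.
by rewrite mulrDl -scalerAl tens_linearl.
Qed.

Lemma mul_tens_eq0 z : (forall a b, z * tens a b = 0) -> z = 0.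
Proof.
by move=> z0; rewrite -[z]mulr1 one_sum_tens mulr_sumr big1.
Qed.

Hypothesis lam_neq0 : lam != 0.

Definition tens_lcoef z a := lam^-1 *: ER (z * tens a 1).
Definition tens_rcoef b z := lam^-1 *: ER (tens 1 b * z).

Lemma mul_tens z a b : z * tens a b = tens (tens_lcoef z a) b.
Proof.
have [w zw] : exists w, forall b, z * tens a b = tens w b.
  have [l ->] := tens_span z; exists (\sum_(p <- l) p.1 * ES (p.2 * a)) => b'.
  rewrite mulr_suml (lin_sum (tens_linearl b')).
  by apply: eq_bigr => p _; rewrite tensM.
by rewrite /tens_lcoef !zw ER_tens mulr1 scalerA mulVf // scale1r.
Qed.

Lemma ER_mul_tens z a b : ER (z * tens a b) = lam *: (tens_lcoef z a * b).
Proof. by rewrite mul_tens ER_tens. Qed.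

Hypothesis ES_in : forall u, S (ES u).

Lemma tens_mul a b z : tens a b * z = tens a (tens_rcoef b z).
Proof.
have [w zw] : exists w, forall a, tens a b * z = tens a w.
  have [l ->] := tens_span z; exists (\sum_(p <- l) ES (b * p.1) * p.2) => a'.
  rewrite mulr_sumr (lin_sum (tens_linearr a')).
  by apply: eq_bigr => p _; rewrite tensM tens_balanced.
by rewrite /tens_rcoef !zw ER_tens mul1r scalerA mulVf // scale1r.
Qed.

Hypothesis qb_l : forall u, \sum_(i < n) ES (u * r i) * s i = u.
Hypothesis qb_r : forall u, \sum_(i < n) r i * ES (s i * u) = u.

Lemma iota_mul_tens u a b : iota u * tens a b = tens (u * a) b.
Proof.
rewrite iotaE mulr_suml -{2}(qb_r a) mulr_sumr (lin_sum (tens_linearl b)).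
by apply: eq_bigr => i _; rewrite tensM mulrA.
Qed.

Lemma tens_mul_iota u a b : tens a b * iota u = tens a (b * u).
Proof.
rewrite iotaE mulr_sumr -(qb_l (b * u)) (lin_sum (tens_linearr a)).
by apply: eq_bigr => i _; rewrite tensM tens_balanced // mulrA.
Qed.

Lemma ER_iota_mull u z : ER (iota u * z) = u * ER z.
Proof.
have [l ->] := tens_span z.
rewrite mulr_sumr !(lin_sum ER_linear) mulr_sumr; apply: eq_bigr => p _.
by rewrite iota_mul_tens !ER_tens -scalerAr mulrA.
Qed.

Lemma ER_iota_mulr u z : ER (z * iota u) = ER z * u.
Proof.
have [l ->] := tens_span z.
rewrite mulr_suml !(lin_sum ER_linear) mulr_suml; apply: eq_bigr => p _.
by rewrite tens_mul_iota !ER_tens -scalerAl mulrA.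
Qed.

Lemma iota_ER_quasi_basisl z :
  \sum_(i < n) iota (ER (z * (lam^-1 *: tens (r i) 1))) * tens 1 (s i) = z.
Proof.
rewrite -[RHS]mulr1 one_sum_tens mulr_sumr; apply: eq_bigr => i _.
by rewrite -scalerAr (linZ ER_linear) iota_mul_tens mulr1 [RHS]mul_tens.
Qed.

Lemma iota_ER_quasi_basisr z :
  \sum_(i < n) (lam^-1 *: tens (r i) 1) * iota (ER (tens 1 (s i) * z)) = z.
Proof.
rewrite -[RHS]mul1r one_sum_tens mulr_suml; apply: eq_bigr => i _.
by rewrite -scalerAl tens_mul_iota mul1r -(linZ (tens_linearr _)) [RHS]tens_mul.
Qed.

Lemma ER_centralizes (T : R -> Prop) c :
  (forall t, T t -> c * iota t = iota t * c) -> centralizes T (ER c).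
Proof. by move=> cT t Tt; rewrite -ER_iota_mulr cT // ER_iota_mull. Qed.

Lemma tens_centralizes (T : R -> Prop) a b :
  (forall t, T t -> S t) -> centralizes T a -> centralizes T b ->
  forall t, T t -> tens a b * iota t = iota t * tens a b.
Proof.
move=> TS aT bT t Tt.
rewrite tens_mul_iota iota_mul_tens (bT t Tt) -tens_balanced ?(aT t Tt) //.
exact: TS.
Qed.

End BasicConstruction.

Theorem proposition3p8 (k : fieldType) (M : algType k) (N : M -> Prop)
  (HN1 : N 1)
  (HNadd : forall u v, N u -> N v -> N (u + v))
  (HNmul : forall u v, N u -> N v -> N (u * v))
  (HNscale : forall (a : k) u, N u -> N (a *: u))
  (Hirr : forall m : M, centralizes N m -> exists a : k, m = a%:A)
  (E : M -> M)
  (HEN : forall m, N (E m))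
  (HEadd : forall u v, E (u + v) = E u + E v)
  (HEbimod : forall n1 m n2, N n1 -> N n2 -> E (n1 * m * n2) = n1 * E m * n2)
  (nq : nat) (x y : 'I_nq -> M)
  (Hqb1 : forall m, \sum_(i < nq) E (m * x i) * y i = m)
  (Hqb2 : forall m, \sum_(i < nq) x i * E (y i * m) = m)
  (HE1 : E 1 = 1)
  (lam : k) (Hlam : lam != 0)
  (Hxy : \sum_(i < nq) x i * y i = lam^-1%:A)
  (M1 : algType k) (tens1 : M -> M -> M1) (iota1 : M -> M1) (EM : M1 -> M)
  (HM1 : is_basic_construction N E lam x y tens1 iota1 EM)
  (M2 : algType k) (tens2 : M1 -> M1 -> M2) (iota2 : M1 -> M2) (EM1 : M2 -> M1)
  (HM2 : is_basic_construction (fun z : M1 => exists m, z = iota1 m)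
           (fun z => iota1 (EM z)) lam
           (fun i => lam^-1 *: tens1 (x i) 1) (fun i => tens1 1 (y i))
           tens2 iota2 EM1)
  (Hdepth1 : exists (d : nat) (u : 'I_d -> M1),
      [/\ (forall i, centralizes (fun z => exists n, N n /\ z = iota1 n) (u i)),
          (forall z : M1, exists c : 'I_d -> M, z = \sum_(i < d) u i * iota1 (c i))
        & (forall c c' : 'I_d -> M,
             \sum_(i < d) u i * iota1 (c i) = \sum_(i < d) u i * iota1 (c' i) ->
             forall i, c i = c' i)])
  (Hdepth2 : exists (d : nat) (v : 'I_d -> M2),
      [/\ (forall i, centralizes (fun z => exists m, z = iota2 (iota1 m)) (v i)),
          (forall z : M2, exists c : 'I_d -> M1, z = \sum_(i < d) v i * iota2 (c i))
        & (forall c c' : 'I_d -> M1,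
             \sum_(i < d) v i * iota2 (c i) = \sum_(i < d) v i * iota2 (c' i) ->
             forall i, c i = c' i)]) :
  let inC := centralizes (fun z => exists n, N n /\ z = iota2 (iota1 n)) in
  (forall c, inC c -> exists a : k, EM (EM1 c) = a%:A) /\
  (forall c, inC c -> (forall c', inC c' -> EM (EM1 (c * c')) = 0) -> c = 0).
Proof.
move=> inC.
pose T1 (z : M1) := exists nn, N nn /\ z = iota1 nn.
have ES1_in z : exists m, iota1 (EM z) = iota1 m by exists (EM z).
have qb1_l := iota_ER_quasi_basisl HM1 Hlam Hqb2.
have qb1_r := iota_ER_quasi_basisr HM1 Hlam HEN Hqb1.
split=> [c cC | c cC Fc0].
  have EM1c_T1 : centralizes T1 (EM1 c).
    apply: (ER_centralizes HM2 ES1_in qb1_l qb1_r) => _ [nn [Nn ->]].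
    by apply: cC; exists nn.
  apply: Hirr; apply: (ER_centralizes HM1 HEN Hqb1 Hqb2) => nn Nn.
  by apply: EM1c_T1; exists nn.
have [d [u [u_T1 u_span _]]] := Hdepth1.
have tens_inC a b : centralizes T1 a -> centralizes T1 b -> inC (tens2 a b).
  move=> aT1 bT1 _ [nn [Nn ->]].
  apply: (tens_centralizes HM2 ES1_in qb1_l qb1_r _ aT1 bT1); last by exists nn.
  by move=> _ [m [_ ->]]; exists m.
have lcoef_u0 i : tens_lcoef lam tens2 EM1 c (u i) = 0.
  apply: (@quasi_basis_faithful _ (fun z => iota1 (EM z)) _ _ _ _ qb1_l) => z.
  have [cz ->] := u_span z.
  rewrite mulr_sumr (lin_sum (ER_linear HM1)).
  rewrite big1 ?(lin0 (iota_linear HM1)) // => j _.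
  rewrite mulrA (ER_iota_mulr HM1 HEN Hqb1).
  have := Fc0 _ (tens_inC _ _ (u_T1 i) (u_T1 j)).
  rewrite (ER_mul_tens HM2 Hlam) (linZ (ER_linear HM1)) => /eqP.
  by rewrite scaler_eq0 (negbTE Hlam) => /eqP ->; rewrite mul0r.
apply: (mul_tens_eq0 HM2) => a b.
have [ca ->] := u_span a.
rewrite (lin_sum (tens_linearl HM2 b)) mulr_sumr big1 // => i _.
rewrite (tens_balanced HM2); last by exists (ca i).
by rewrite (mul_tens HM2 Hlam) lcoef_u0 (lin0 (tens_linearl HM2 _)).
Qed.
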